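(* Let $n\ge 2$, $\varepsilon\in(0,1)$, and let $K\in T^n$ satisfy $(1-\varepsilon)D_n\subseteq \operatorname{conv}K\subseteq (1+\varepsilon)D_n$. Then \[ (1-\varepsilon)D_n\subseteq K+2\sqrt{\varepsilon}\,D_n . \]
   Context: $D_n$ denotes the closed Euclidean unit ball in $\mathbb R^n$; $\operatorname{conv}$ denotes convex hull and $+$ the Minkowski sum. A nonempty compact set $K\subset\mathbb R^n$ is called star shaped if $x\in K$ implies that the segment $[0,x]\subseteq K$; $T^n$ denotes the family of star shaped sets in $\mathbb R^n$. *)

From mathcomp Require Import ssreflect ssrfun ssrbool eqtype ssrnat seq fintype bigop.
From Stdlib Require Import Reals.
Set Implicit Arguments.
Unset Strict Implicit.
Open Scope R_scope.

Definition vec (n : nat) := 'I_n -> R.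

Definition vadd n (x y : vec n) : vec n := fun i => x i + y i.
Definition vsub n (x y : vec n) : vec n := fun i => x i - y i.
Definition vscale n (t : R) (x : vec n) : vec n := fun i => t * x i.
Definition vzero n : vec n := fun _ => 0.

Definition vnorm n (x : vec n) : R := sqrt (\big[Rplus/0]_(i < n) (x i * x i)).

Definition vset n := vec n -> Prop.
Definition vsubset n (A B : vset n) : Prop := forall x, A x -> B x.

Definition unit_ball n : vset n := fun x => vnorm x <= 1.

Definition dilate n (t : R) (A : vset n) : vset n :=
  fun x => exists a, A a /\ x = vscale t a.

Definition minkowski n (A B : vset n) : vset n :=
  fun x => exists a b, A a /\ B b /\ x = vadd a b.

Definition conv n (A : vset n) : vset n :=
  fun x => exists (m : nat) (p : 'I_m -> vec n) (w : 'I_m -> R),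
    (forall j, A (p j)) /\ (forall j, 0 <= w j) /\
    \big[Rplus/0]_(j < m) w j = 1 /\
    (forall i, x i = \big[Rplus/0]_(j < m) (w j * p j i)).

Definition compact n (A : vset n) : Prop :=
  forall u : nat -> vec n, (forall k, A (u k)) ->
    exists (phi : nat -> nat) (l : vec n),
      (forall k, (phi k < phi (S k))%nat) /\ A l /\
      forall e, 0 < e -> exists N, forall k, (N <= k)%nat ->
        vnorm (vsub (u (phi k)) l) < e.

(* T^n : nonempty compact star shaped (w.r.t. the origin) sets *)
Definition star_shaped n (K : vset n) : Prop :=
  (exists x, K x) /\ compact K /\
  forall x, K x -> forall t, 0 <= t <= 1 -> K (vscale t x).

From HB Require Import structures.
From mathcomp Require Import ssreflect ssrfun ssrbool eqtype ssrnat seq fintype bigop.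
From Stdlib Require Import Reals Lra Psatz Classical FunctionalExtensionality.
Set Implicit Arguments.
Unset Strict Implicit.
Open Scope R_scope.

(* Write x = r u with |u| = 1 and r = |x| <= 1 - eps. Since (1 - eps) u lies in
   conv K, the linear functional <., u> is at least 1 - eps at some point p of
   K, while |p| <= 1 + eps. The point t p of the segment [0, p] with
   <t p, u> = r lies in K, and x - t p is orthogonal to u, so
   |x - t p|^2 = t^2 (|p|^2 - <p, u>^2) <= (1 + eps)^2 - (1 - eps)^2 = 4 eps. *)

HB.instance Definition _ := Monoid.isComLaw.Build R 0 Rplus
  (fun x y z => esym (Rplus_assoc x y z)) Rplus_comm Rplus_0_l.

Lemma big_Rmult_l m c (f : 'I_m -> R) :
  \big[Rplus/0]_(i < m) (c * f i) = c * \big[Rplus/0]_(i < m) f i.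
Proof. by symmetry; apply: (big_morph (Rmult c)) => [x y|]; ring. Qed.

Lemma big_Rplus m (f g : 'I_m -> R) :
  \big[Rplus/0]_(i < m) (f i + g i) =
  \big[Rplus/0]_(i < m) f i + \big[Rplus/0]_(i < m) g i.
Proof. exact: big_split. Qed.

Lemma big_Rle0_eq0 m (f : 'I_m -> R) : (forall i, f i <= 0) ->
  \big[Rplus/0]_(i < m) f i = 0 -> forall j, f j = 0.
Proof.
move=> f_le0 sum_f0 j.
have : \big[Rplus/0]_(i < m) f i = f j + \big[Rplus/0]_(i < m | i != j) f i.
  exact: bigD1.
have : \big[Rplus/0]_(i < m | i != j) f i <= 0.
  by apply: (big_ind (fun v => v <= 0)); [lra | move=> *; lra | move=> i _].
by have := f_le0 j; lra.
Qed.

Lemma convex_comb_le_term m (w d : 'I_m -> R) : (forall j, 0 <= w j) ->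
  \big[Rplus/0]_(j < m) w j = 1 ->
  exists j, \big[Rplus/0]_(j < m) (w j * d j) <= d j.
Proof.
move=> w_ge0 sum_w1; set c := \big[Rplus/0]_(j < m) _.
apply: NNPP => no_j.
have d_lt_c j : d j < c by apply: Rnot_le_lt => ?; apply: no_j; exists j.
have sum0 : \big[Rplus/0]_(j < m) (w j * d j + (- c) * w j) = 0.
  by rewrite big_Rplus big_Rmult_l sum_w1 -/c; ring.
have w0 j : w j = 0.
  have terms_le0 i : w i * d i + (- c) * w i <= 0.
    by have := w_ge0 i; have := d_lt_c i; nra.
  have := big_Rle0_eq0 terms_le0 sum0 j.
  by have := d_lt_c j; have := w_ge0 j; nra.
have : \big[Rplus/0]_(j < m) w j = 0 by apply: big1 => j _; apply: w0.
lra.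
Qed.

Definition dot n (x y : vec n) : R := \big[Rplus/0]_(i < n) (x i * y i).

Lemma dot_ge0 n (x : vec n) : 0 <= dot x x.
Proof. by apply: (big_ind (fun v => 0 <= v)); [lra | move=> *; lra | move=> i _; nra]. Qed.

Lemma dotC n (x y : vec n) : dot x y = dot y x.
Proof. by apply: eq_bigr => i _; ring. Qed.

Lemma dotZl n a (x y : vec n) : dot (vscale a x) y = a * dot x y.
Proof. by rewrite /dot -big_Rmult_l; apply: eq_bigr => i _; rewrite /vscale; ring. Qed.

Lemma dotZr n a (x y : vec n) : dot x (vscale a y) = a * dot x y.
Proof. by rewrite dotC dotZl dotC. Qed.

Lemma dot_vsub n (x y : vec n) :
  dot (vsub x y) (vsub x y) = dot x x - 2 * dot x y + dot y y.
Proof.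
rewrite /dot (eq_bigr (fun i => x i * x i + (-2) * (x i * y i) + y i * y i)).
  by rewrite !big_Rplus big_Rmult_l; ring.
by move=> i _; rewrite /vsub; ring.
Qed.

Lemma unit_ball_dot n (x : vec n) : unit_ball x <-> dot x x <= 1.
Proof.
rewrite /unit_ball /vnorm -/(dot x x) -{1}sqrt_1.
split=> [|?]; last exact: sqrt_le_1_alt.
by move/sqrt_le_0; apply; [apply: dot_ge0 | lra].
Qed.

Lemma subset_conv n (K : vset n) x : K x -> conv K x.
Proof.
move=> Kx; exists 1%nat, (fun _ => x), (fun _ => 1).
by do ![split] => [//|_||i]; rewrite ?big_ord1; lra.
Qed.

Lemma conv_dot_le n (K : vset n) (x u : vec n) :
  conv K x -> exists p, K p /\ dot x u <= dot p u.
Proof.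
move=> [m [p [w [Kp [w_ge0 [sum_w1 x_comb]]]]]].
have -> : dot x u = \big[Rplus/0]_(j < m) (w j * dot (p j) u).
  transitivity (\big[Rplus/0]_(i < n) \big[Rplus/0]_(j < m) (w j * (p j i * u i))).
    apply: eq_bigr => i _; rewrite x_comb Rmult_comm -big_Rmult_l.
    by apply: eq_bigr => j _; ring.
  by rewrite exchange_big; apply: eq_bigr => j _; rewrite /dot big_Rmult_l.
by have [j ?] := convex_comb_le_term (fun j => dot (p j) u) w_ge0 sum_w1; exists (p j).
Qed.

Lemma minkowski_ball_of_dot n (K : vset n) r (x k : vec n) : 0 < r -> K k ->
  dot (vsub x k) (vsub x k) <= r * r ->
  minkowski K (dilate r (@unit_ball n)) x.
Proof.
move=> r_gt0 Kk dist_le; exists k, (vsub x k); do ![split] => //.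
- exists (vscale (/ r) (vsub x k)); split.
  + apply/unit_ball_dot; rewrite dotZl dotZr -Rmult_assoc.
    have <- : / r * / r * (r * r) = 1 by field; lra.
    apply: Rmult_le_compat_l => //.
    by have := Rinv_0_lt_compat r r_gt0; nra.
  + by apply: functional_extensionality => i; rewrite /vscale; field; lra.
- by apply: functional_extensionality => i; rewrite /vadd /vsub; ring.
Qed.

(* The point t p with t = r / <p, u> satisfies <r u - t p, u> = 0. *)
Lemma star_point_near_ray n (K : vset n) (p u : vec n) r B :
  (forall x, K x -> forall t, 0 <= t <= 1 -> K (vscale t x)) -> K p ->
  dot u u = 1 -> 0 < dot p u -> 0 <= r <= dot p u ->
  0 <= B -> dot p p - dot p u * dot p u <= B ->
  exists k, K k /\ dot (vsub (vscale r u) k) (vsub (vscale r u) k) <= B.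
Proof.
move=> K_star Kp unit_u d_gt0 [r_ge0 r_le] B_ge0 gap_le.
set d := dot p u in d_gt0 r_le gap_le; set t := r / d.
have td : t * d = r by rewrite /t; field; lra.
have t01 : 0 <= t <= 1.
  split; first by apply: Rmult_le_pos => //; apply/Rlt_le/Rinv_0_lt_compat.
  by apply: (Rmult_le_reg_r d) => //; lra.
exists (vscale t p); split; first exact: K_star.
rewrite dot_vsub !(dotZl, dotZr) unit_u (dotC u) -/d -td.
have : t * t * (dot p p - d * d) <= t * t * B by apply: Rmult_le_compat_l; nra.
have : t * t * B <= 1 * B by apply: Rmult_le_compat_r; nra.
by nra.
Qed.

Theorem mainTheorem4 (n : nat) (eps : R) (K : vset n) :
  (2 <= n)%nat -> 0 < eps < 1 -> star_shaped K ->
  vsubset (dilate (1 - eps) (@unit_ball n)) (conv K) ->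
  vsubset (conv K) (dilate (1 + eps) (@unit_ball n)) ->
  vsubset (dilate (1 - eps) (@unit_ball n))
         (minkowski K (dilate (2 * sqrt eps) (@unit_ball n))).
Proof.
move=> _ eps01 [[k0 Kk0] [_ K_star]] ball_conv conv_ball x [y [/unit_ball_dot y_le1 ->]].
suff [k [Kk dist_le]] : exists k, K k /\
    dot (vsub (vscale (1 - eps) y) k) (vsub (vscale (1 - eps) y) k) <= 4 * eps.
  apply: (minkowski_ball_of_dot _ Kk); first by have := sqrt_lt_R0 eps; lra.
  by have := sqrt_sqrt eps; lra.
case: (Rle_lt_or_eq_dec _ _ (dot_ge0 y)) => [y_gt0 | y0]; last first.
  exists (vscale 0 k0); split; first by apply: K_star => //; lra.
  by rewrite dot_vsub !(dotZl, dotZr) -y0; nra.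
set s := sqrt (dot y y); set u := vscale (/ s) y.
have s_gt0 : 0 < s by apply: sqrt_lt_R0.
have ss : s * s = dot y y by apply: sqrt_sqrt; lra.
have s_le1 : s <= 1 by rewrite -sqrt_1; apply: sqrt_le_1_alt.
have unit_u : dot u u = 1 by rewrite !(dotZl, dotZr) -ss; field; lra.
have y_su : vscale (1 - eps) y = vscale ((1 - eps) * s) u.
  by apply: functional_extensionality => i; rewrite /u /vscale; field; lra.
have [p [Kp p_far]] : exists p, K p /\ dot (vscale (1 - eps) u) u <= dot p u.
  by apply/conv_dot_le/ball_conv; exists u; split => //; apply/unit_ball_dot; lra.
rewrite dotZl unit_u in p_far.
have p_le : dot p p <= (1 + eps) * (1 + eps).
  have [q [/unit_ball_dot q_le1 p_q]] := conv_ball _ (subset_conv Kp).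
  by rewrite p_q dotZl dotZr; have := dot_ge0 q; nra.
by rewrite y_su; apply: (star_point_near_ray K_star Kp unit_u); nra.
Qed.
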